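(* Let $\mathcal{S}_0\subset\mathbb{R}^n$ be a compact convex set of diameter $D$, and let $f_t,g_t:\mathcal{S}_0\to\mathbb{R}$, $t=1,\dots,T$, be convex with (sub)gradients bounded by $G$ and $f_t\le F$, $g_t\le F$ on $\mathcal{S}_0$, where each $f_t$ is $\ell$-strongly convex. For $V\ge0$ and $K\in\{1,\dots,T\}$ let $V_K$ be the set of sequences $z_1,\dots,z_T\in\mathcal{S}_0$ with $\sum_{t=2}^T\|z_t-z_{t-1}\|\le V$ and exactly $K$ indices $i$ with $g_i(z_i)\le0$, assumed nonempty. Define $\mathcal{L}_t(\theta,\lambda)=f_t(\theta)+\lambda[g_t(\theta)]_+-\frac{\phi_t}2\lambda^2$ and run $\theta_1\in\mathcal{S}_0$, $\lambda_t=[g_t(\theta_t)]_+/\phi_t$, $\theta_{t+1}=\Pi_{\mathcal{S}_0}(\theta_t-\eta_t\nabla_\theta\mathcal{L}_t(\theta_t,\lambda_t))$ (subgradient; $\partial[g_t]_+=0$ where $g_t\le0$), with $\phi_t=2G^2\eta_t$, $\eta_t=\frac{1-\gamma}{\ell(1-\gamma^t)}$ and $\gamma=1-\frac12\sqrt{\frac{\max\{V+T-K,\log^2T/T\}}{(D+1)T}}$. Then for any $z_1^T\in V_K$, $$\sum_{t=1}^T\big(f_t(\theta_t)-f_t(z_t)\big)\le\max\{O(\sqrt{T(T-K+V)}),O(\log T)\},$$ $$\sum_{t=1}^T[g_t(\theta_t)]_+\le\max\{O(T^{3/4}(T-K+V)^{1/4}),O(\sqrt{T\log T})\}.$$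
   Context: $[a]_+=\max\{a,0\}$; $\Pi_{\mathcal{S}_0}$ is Euclidean projection; $\ell$-strongly convex means $f(y)\ge f(x)+\nabla f(x)^\top(y-x)+\frac\ell2\|x-y\|^2$. $O(\cdot)$ hides constants depending only on $\ell,G,F,D$. *)

From HB Require Import structures.
From mathcomp Require Import all_boot all_order all_algebra.
From mathcomp Require Import all_classical all_reals all_analysis.
Set Implicit Arguments. Unset Strict Implicit. Unset Printing Implicit Defensive.
Import Order.TTheory GRing.Theory Num.Theory.
Local Open Scope ring_scope.
Local Open Scope classical_set_scope.

Section Defs.
Variables (R : realType) (n : nat).
Notation vec := 'rV[R]_n.

Definition dot (u v : vec) : R := \sum_(i < n) u ord0 i * v ord0 i.
Definition enorm (u : vec) : R := Num.sqrt (dot u u).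

Definition pos_part (a : R) : R := Num.max a 0.

Definition convex_set_R (S : set vec) : Prop :=
  forall x y (a : R), S x -> S y -> 0 <= a <= 1 -> S (a *: x + (1 - a) *: y).

Definition has_diameter (S : set vec) (D : R) : Prop :=
  (forall x y, S x -> S y -> enorm (x - y) <= D) /\
  (forall e, 0 < e -> exists x y, S x /\ S y /\ D - e < enorm (x - y)).

Definition is_proj (S : set vec) (x p : vec) : Prop :=
  S p /\ forall y, S y -> enorm (x - p) <= enorm (x - y).

Definition is_subgrad (S : set vec) (h : vec -> R) (x s : vec) : Prop :=
  forall y, S y -> h x + dot s (y - x) <= h y.

Definition is_sc_subgrad (S : set vec) (l : R) (h : vec -> R) (x s : vec) : Prop :=
  forall y, S y -> h x + dot s (y - x) + l / 2 * enorm (x - y) ^+ 2 <= h y.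

Definition in_VK (S : set vec) (g : nat -> vec -> R) (T : nat) (V : R) (K : nat)
    (z : nat -> vec) : Prop :=
  (forall t, (1 <= t <= T)%N -> S (z t)) /\
  \sum_(2 <= t < T.+1) enorm (z t - z t.-1) <= V /\
  #|[set i : 'I_T.+1 | (1 <= val i)%N && (g i (z i) <= 0)]| = K.

End Defs.

Definition gamma_par (R : realType) (D V : R) (T K : nat) : R :=
  1 - 2^-1 * Num.sqrt (Num.max (V + T%:R - K%:R) (ln (T%:R) ^+ 2 / T%:R)
                       / ((D + 1) * T%:R)).
Definition eta_par (R : realType) (l gam : R) (t : nat) : R :=
  (1 - gam) / (l * (1 - gam ^+ t)).
Definition phi_par (R : realType) (G eta : R) : R := 2 * G ^+ 2 * eta.

From HB Require Import structures.
From mathcomp Require Import all_boot all_order all_algebra.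
From mathcomp Require Import all_classical all_reals all_analysis.
From mathcomp Require Import ring lra.
Import Order.TTheory GRing.Theory Num.Theory.
Import numFieldNormedType.Exports.
Local Open Scope ring_scope.
Local Open Scope classical_set_scope.

(* Each projected subgradient step on the penalized Lagrangian gives, for any comparator
   z_t, regret_t + [g_t(theta_t)]_+^2 / (8 G^2 eta_t) <= [g_t(z_t)]_+^2 / (2 G^2 eta_t)
   + (|theta_t - z_t|^2 - |theta_(t+1) - z_t|^2) / (2 eta_t) - l/2 |theta_t - z_t|^2 + G^2 eta_t.
   Summed over t, the penalty terms vanish except on the T - K rounds where the comparator is
   infeasible; the distance terms telescope up to the path length V because the weights
   1 / (2 eta_t) grow by at most l/2 per round, which strong convexity absorbs; and
   sum eta_t <= (1 + ln T + (1 - gamma) T) / l.  The tuning 1 - gamma = Q / (2 sqrt(D+1) T),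
   Q = max(sqrt(T (T - K + V)), ln T), makes all three contributions O(Q), which bounds the
   regret.  The same inequality bounds sum [g_t]_+^2 / eta_t by O(T), and AM-GM turns this into
   sum [g_t]_+ = O(sqrt(T Q)).  When Q >= T both bounds already hold round by round. *)

Set Implicit Arguments. Unset Strict Implicit.

Section Dot.
Variables (R : realType) (n : nat).
Implicit Types (u v w x y z p : 'rV[R]_n) (S : set 'rV[R]_n).

Lemma dotC u v : dot u v = dot v u.
Proof. by apply: eq_bigr => i _; rewrite mulrC. Qed.

Lemma dotDl u v w : dot (u + v) w = dot u w + dot v w.
Proof. by rewrite /dot -big_split; apply: eq_bigr => i _; rewrite !mxE mulrDl. Qed.

Lemma dotZl (a : R) u w : dot (a *: u) w = a * dot u w.
Proof. by rewrite /dot mulr_sumr; apply: eq_bigr => i _; rewrite !mxE mulrA. Qed.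

Lemma dotNl u w : dot (- u) w = - dot u w.
Proof. by rewrite -scaleN1r dotZl mulN1r. Qed.

Lemma dotBl u v w : dot (u - v) w = dot u w - dot v w.
Proof. by rewrite dotDl dotNl. Qed.

Lemma dotDr u v w : dot w (u + v) = dot w u + dot w v.
Proof. by rewrite dotC dotDl !(dotC w). Qed.

Lemma dotBr u v w : dot w (u - v) = dot w u - dot w v.
Proof. by rewrite dotC dotBl !(dotC w). Qed.

Lemma dotNr u w : dot w (- u) = - dot w u.
Proof. by rewrite dotC dotNl dotC. Qed.

Lemma dotZr (a : R) u w : dot w (a *: u) = a * dot w u.
Proof. by rewrite dotC dotZl dotC. Qed.

Lemma dot0r u : dot u 0 = 0.
Proof. by rewrite -(scale0r 0) dotZr mul0r. Qed.

Lemma dot_ge0 u : 0 <= dot u u.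
Proof. by apply: sumr_ge0 => i _; rewrite -expr2 sqr_ge0. Qed.

Lemma enorm_ge0 u : 0 <= enorm u.
Proof. exact: sqrtr_ge0. Qed.

Lemma enorm_sqr u : enorm u ^+ 2 = dot u u.
Proof. by rewrite sqr_sqrtr ?dot_ge0. Qed.

Lemma dot_sqrBZ u w (s : R) :
  dot (u - s *: w) (u - s *: w) = dot u u - 2 * s * dot u w + s ^+ 2 * dot w w.
Proof. rewrite !dotBl !dotBr !dotZl !dotZr (dotC w u); ring. Qed.

Lemma dot_sqrD u w : dot (u + w) (u + w) = dot u u + 2 * dot u w + dot w w.
Proof. rewrite !dotDl !dotDr (dotC w u); ring. Qed.

Lemma dot_sqrD_le u w : dot (u + w) (u + w) <= 2 * dot u u + 2 * dot w w.
Proof. by have := dot_ge0 (u - 1 *: w); rewrite dot_sqrBZ dot_sqrD; lra. Qed.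

Lemma dot_CauchySchwarz u v : dot u v <= enorm u * enorm v.
Proof.
have quad t : 0 <= dot u u * t ^+ 2 - 2 * t * dot u v + dot v v.
  by have := dot_ge0 (v - t *: u); rewrite dot_sqrBZ (dotC v u); lra.
have [uv_le0 | uv_gt0] := lerP (dot u v) 0.
  by rewrite (le_trans uv_le0) // mulr_ge0 ?enorm_ge0.
have uu_gt0 : 0 < dot u u.
  rewrite lt0r dot_ge0 andbT; apply/eqP => uu0.
  have := quad ((dot v v + 1) / (2 * dot u v)); rewrite uu0 mul0r add0r.
  have -> : 2 * ((dot v v + 1) / (2 * dot u v)) * dot u v = dot v v + 1.
    by field; rewrite gt_eqF.
  lra.
rewrite -(ler_pXn2r (isT : (0 < 2)%N)) ?nnegrE ?(ltW uv_gt0) ?mulr_ge0 ?enorm_ge0 //.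
rewrite exprMn !enorm_sqr.
have := quad (dot u v / dot u u).
have -> : dot u u * (dot u v / dot u u) ^+ 2 - 2 * (dot u v / dot u u) * dot u v
  + dot v v = (dot u u * dot v v - dot u v ^+ 2) / dot u u by field; rewrite gt_eqF.
by rewrite pmulr_lge0 ?invr_gt0 // subr_ge0.
Qed.

Lemma sqrdist_switch_le x z z' (D : R) : enorm (z - x) <= D -> enorm (z' - x) <= D ->
  dot (x - z') (x - z') <= dot (x - z) (x - z) + 2 * D * enorm (z' - z).
Proof.
move=> zxD z'xD.
have diffE : dot (x - z') (x - z') - dot (x - z) (x - z)
    = dot (z - x) (z' - z) + dot (z' - x) (z' - z).
  rewrite !dotBl !dotBr (dotC z' x) (dotC z x) (dotC z z'); ring.
have := dot_CauchySchwarz (z - x) (z' - z); have := dot_CauchySchwarz (z' - x) (z' - z).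
have : (enorm (z - x) + enorm (z' - x)) * enorm (z' - z) <= 2 * D * enorm (z' - z).
  by rewrite ler_wpM2r ?enorm_ge0 //; lra.
lra.
Qed.

Lemma proj_obtuse S y p z : convex_set_R S -> is_proj S y p -> S z ->
  dot (y - p) (z - p) <= 0.
Proof.
move=> convS [Sp p_min] Sz.
set d := dot (y - p) (z - p); set m := dot (z - p) (z - p).
have m_ge0 : 0 <= m by exact: dot_ge0.
have toward_z s : 0 < s <= 1 -> 2 * d <= s * m.
  move=> /andP[s_gt0 s_le1].
  have := p_min _ (convS z p s Sz Sp (introT andP (conj (ltW s_gt0) s_le1))).
  rewrite ler_sqrt ?dot_ge0 //.
  have -> : y - (s *: z + (1 - s) *: p) = (y - p) - s *: (z - p).
    by apply/rowP => i; rewrite !mxE; ring.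
  rewrite dot_sqrBZ -/d -/m expr2 -subr_ge0.
  have -> : dot (y - p) (y - p) - 2 * s * d + s * s * m - dot (y - p) (y - p)
    = s * (s * m - 2 * d) by ring.
  by rewrite pmulr_rge0 // subr_ge0.
rewrite leNgt; apply/negP => d_gt0.
have dm_gt0 : 0 < d + m by lra.
have := toward_z (d / (d + m)).
rewrite divr_gt0 // ler_pdivrMr // mul1r lerDl m_ge0 => /(_ isT).
have : d / (d + m) * m <= d.
  by rewrite mulrAC ler_pdivrMr // ler_pM2l //; lra.
lra.
Qed.

Lemma proj_step_le S x p z (e : R) u : 0 < e -> convex_set_R S ->
  is_proj S (x - e *: u) p -> S z ->
  dot (x - z) u <= (dot (x - z) (x - z) - dot (p - z) (p - z)) / (2 * e) + e / 2 * dot u u.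
Proof.
move=> e_gt0 convS proj Sz.
have obtuse := proj_obtuse convS proj Sz.
set y := x - e *: u in proj obtuse *.
have split_y : (x - z) - e *: u = (y - p) + (p - z).
  by rewrite /y addrA subrK addrAC.
have := dot_ge0 (y - p).
have := congr1 (fun w => dot w w) split_y => /=.
have flip : dot (y - p) (p - z) = - dot (y - p) (z - p) by rewrite -dotNr opprB.
rewrite dot_sqrBZ (dot_sqrD (y - p)) flip => expand yp_ge0.
have two_e_gt0 : 0 < 2 * e by rewrite mulr_gt0.
rewrite -(ler_pM2l two_e_gt0).
set A := dot (x - z) (x - z) - dot (p - z) (p - z).
have -> : 2 * e * (A / (2 * e) + e / 2 * dot u u) = A + e ^+ 2 * dot u u.
  by field; rewrite gt_eqF.
rewrite /A; lra.
Qed.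

Lemma dot_sqrDZ_le u v (c G : R) : enorm u <= G -> enorm v <= G ->
  dot (u + c *: v) (u + c *: v) <= 2 * G ^+ 2 * (1 + c ^+ 2).
Proof.
move=> uG vG; have G_ge0 := le_trans (enorm_ge0 u) uG.
have sqr_le w : enorm w <= G -> dot w w <= G ^+ 2.
  by move=> wG; rewrite -enorm_sqr !expr2 ler_pM ?enorm_ge0.
have cE : c * (c * dot v v) = c ^+ 2 * dot v v by rewrite mulrA -expr2.
apply: le_trans (dot_sqrD_le _ _) _; rewrite dotZl dotZr cE.
have := ler_wpM2l (sqr_ge0 c) (sqr_le _ vG); have := sqr_le _ uG; lra.
Qed.

End Dot.

Section Scalars.
Variable R : realType.
Implicit Types a b : R.

Lemma young_le a b (k : R) : 0 < k -> a * b <= k * a ^+ 2 / 2 + b ^+ 2 / (2 * k).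
Proof.
move=> k_gt0; rewrite -subr_ge0.
have -> : k * a ^+ 2 / 2 + b ^+ 2 / (2 * k) - a * b = (k * a - b) ^+ 2 / (2 * k).
  by field; rewrite gt_eqF.
by rewrite divr_ge0 ?sqr_ge0 // mulr_ge0 ?ltW.
Qed.

Lemma pos_part_ge0 a : 0 <= pos_part a.
Proof. by rewrite /pos_part le_max lexx orbT. Qed.

Lemma pos_part_ge a : a <= pos_part a.
Proof. by rewrite /pos_part le_max lexx. Qed.

Lemma pos_part_id a : 0 <= a -> pos_part a = a.
Proof. by move=> a_ge0; rewrite /pos_part max_l. Qed.

Lemma pos_part_le0 a : a <= 0 -> pos_part a = 0.
Proof. by move=> a_le0; rewrite /pos_part max_r. Qed.

Lemma pos_part_le a b : a <= b -> pos_part a <= pos_part b.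
Proof. by move=> ab; rewrite /pos_part ge_max !le_max ab lexx !orbT. Qed.

End Scalars.

Section Subgradient.
Variables (R : realType) (n : nat).
Implicit Types (x z s : 'rV[R]_n) (S : set 'rV[R]_n).

Lemma sc_subgrad_le S (l : R) h x s z : is_sc_subgrad S l h x s -> S z ->
  h x - h z + l / 2 * dot (x - z) (x - z) <= dot (x - z) s.
Proof.
move=> sc Sz; have := sc z Sz.
have -> : dot s (z - x) = - dot (x - z) s by rewrite dotC -dotNl opprB.
rewrite enorm_sqr; lra.
Qed.

Lemma sc_subgrad_gap_le S (l G D : R) h x s z : is_sc_subgrad S l h x s -> S z ->
  0 <= l -> enorm s <= G -> enorm (x - z) <= D -> h x - h z <= G * D.
Proof.
move=> sc Sz l_ge0 sG xzD.
have := sc_subgrad_le sc Sz; have := dot_CauchySchwarz (x - z) s.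
have : enorm (x - z) * enorm s <= G * D by rewrite mulrC ler_pM ?enorm_ge0.
have : 0 <= l / 2 * dot (x - z) (x - z) by rewrite mulr_ge0 ?divr_ge0 ?dot_ge0.
lra.
Qed.

Lemma pos_part_subgrad_le S g x s z : is_subgrad S g x s -> S z ->
  pos_part (g x) - pos_part (g z) <= dot (x - z) (if 0 < g x then s else 0).
Proof.
move=> sub Sz; case: ifPn => [gx_gt0 | gx_le0].
  have := sub z Sz; have := pos_part_ge (g z).
  have -> : dot s (z - x) = - dot (x - z) s by rewrite dotC -dotNl opprB.
  rewrite (pos_part_id (ltW gx_gt0)); lra.
rewrite dot0r pos_part_le0 ?lerNgt //; have := pos_part_ge0 (g z); lra.
Qed.

(* [lam = [g x]_+ / phi] maximizes the penalized Lagrangian in the dual variable, so the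
   penalty contributes the negative square [- [g x]_+^2 / (8 G^2 eta)] that later
   controls the violation. *)
Lemma penalized_step_le S (l G eta : R) f g sf sg x x' z :
  0 < G -> 0 < eta -> convex_set_R S -> S z ->
  is_sc_subgrad S l f x sf -> is_subgrad S g x sg -> enorm sf <= G -> enorm sg <= G ->
  is_proj S (x - eta *: (sf + (pos_part (g x) / phi_par G eta) *:
                                  (if 0 < g x then sg else 0))) x' ->
  f x - f z + pos_part (g x) ^+ 2 / (8 * G ^+ 2 * eta)
  <= pos_part (g z) ^+ 2 / (2 * G ^+ 2 * eta)
     + (dot (x - z) (x - z) - dot (x' - z) (x' - z)) / (2 * eta)
     - l / 2 * dot (x - z) (x - z) + G ^+ 2 * eta.
Proof.
move=> G_gt0 eta_gt0 convS Sz fsc gsub sfG sgG proj.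
set c := pos_part (g x) in proj *; set b := pos_part (g z).
set lam := c / phi_par G eta in proj *; set s := if 0 < g x then sg else 0 in proj *.
set k := G ^+ 2 * eta.
have k_gt0 : 0 < k by rewrite mulr_gt0 ?exprn_gt0.
have c_eq : c = 2 * k * lam by rewrite /lam /phi_par /k; field; rewrite !gt_eqF.
have lam_ge0 : 0 <= lam by rewrite divr_ge0 ?pos_part_ge0 // /phi_par mulrA ltW ?mulr_gt0.
have sG : enorm s <= G by rewrite /s; case: ifP => // _; rewrite /enorm dot0r sqrtr0 ltW.
have descent := proj_step_le eta_gt0 convS proj Sz; rewrite dotDr dotZr in descent.
have step_len : eta / 2 * dot (sf + lam *: s) (sf + lam *: s) <= k + k * lam ^+ 2.
  apply: le_trans (ler_wpM2l _ (dot_sqrDZ_le lam sfG sG)) _.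
    by rewrite divr_ge0 ?ltW.
  by rewrite /k le_eqVlt; apply/orP; left; apply/eqP; field.
have linearized : f x - f z + l / 2 * dot (x - z) (x - z) + lam * (c - b)
    <= dot (x - z) sf + lam * dot (x - z) s.
  apply: lerD; first exact: sc_subgrad_le fsc Sz.
  by apply: ler_wpM2l => //; apply: pos_part_subgrad_le gsub Sz.
have young := young_le lam b k_gt0.
have -> : c ^+ 2 / (8 * G ^+ 2 * eta) = k * lam ^+ 2 / 2.
  by rewrite c_eq /k; field; rewrite !gt_eqF.
have -> : b ^+ 2 / (2 * G ^+ 2 * eta) = b ^+ 2 / (2 * k) by rewrite /k mulrA.
have : lam * c = 2 * (k * lam ^+ 2) by rewrite c_eq; ring.
lra.
Qed.

End Subgradient.

Section Estimates.
Variable R : realType.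
Implicit Types (a l : R) (t T : nat).

Lemma bernoulli_ineq (a : R) t : 0 <= a -> 1 + t%:R * a <= (1 + a) ^+ t.
Proof.
move=> a_ge0; elim: t => [|t IH]; first by rewrite mul0r addr0 expr0.
rewrite exprS -natr1.
have := ler_wpM2l (addr_ge0 ler01 a_ge0) IH.
have : 0 <= t%:R * a * a by rewrite !mulr_ge0.
nra.
Qed.

Lemma geometric_le_inv (gam : R) t : 0 <= gam <= 1 ->
  gam ^+ t * (1 + t%:R * (1 - gam)) <= 1.
Proof.
move=> /andP[gam_ge0 gam_le1].
apply: le_trans (_ : gam ^+ t * (1 + (1 - gam)) ^+ t <= 1).
  by rewrite ler_wpM2l ?bernoulli_ineq ?exprn_ge0 // subr_ge0.
by rewrite -exprMn exprn_ile1 //; nra.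
Qed.

Section Eta.
Variables (l gam : R) (t : nat).
Hypotheses (l_gt0 : 0 < l) (gam_ge0 : 0 <= gam) (gam_lt1 : gam < 1) (t_gt0 : (0 < t)%N).

Lemma geo_weight_gt0 : 0 < 1 - gam ^+ t.
Proof. by rewrite subr_gt0 exprn_ilt1 -?lt0n. Qed.

Lemma eta_par_gt0 : 0 < eta_par l gam t.
Proof. by rewrite divr_gt0 ?subr_gt0 // mulr_gt0 // geo_weight_gt0. Qed.

Lemma inv2_eta_par : (2 * eta_par l gam t)^-1 = l * (1 - gam ^+ t) / (2 * (1 - gam)).
Proof.
have := geo_weight_gt0; have : 0 < 1 - gam by rewrite subr_gt0.
by move=> ? ?; rewrite /eta_par; field; rewrite !gt_eqF.
Qed.

Lemma eta_par_le : eta_par l gam t <= (t%:R^-1 + (1 - gam)) / l.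
Proof.
have t_pos : 0 < t%:R :> R by rewrite ltr0n.
have geo := geometric_le_inv t (introT andP (conj gam_ge0 (ltW gam_lt1))).
have key : 1 - gam <= (t%:R^-1 + (1 - gam)) * (1 - gam ^+ t).
  have -> : (t%:R^-1 + (1 - gam)) * (1 - gam ^+ t)
      = (1 + t%:R * (1 - gam)) * (1 - gam ^+ t) / t%:R by field; rewrite gt_eqF.
  rewrite ler_pdivlMr //; lra.
rewrite /eta_par [l * _]mulrC invfM mulrA ler_pM2r ?invr_gt0 //.
by rewrite ler_pdivrMr ?geo_weight_gt0.
Qed.

Lemma inv2_eta_par_le : (2 * eta_par l gam t)^-1 <= l / (2 * (1 - gam)).
Proof.
rewrite inv2_eta_par ler_pM2r ?invr_gt0 ?mulr_gt0 ?subr_gt0 // ger_pMr // gerBl.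
exact: exprn_ge0.
Qed.

End Eta.

Lemma inv2_eta_parS l gam t : 0 < l -> 0 <= gam -> gam < 1 -> (0 < t)%N ->
  (2 * eta_par l gam t.+1)^-1 - (2 * eta_par l gam t)^-1 <= l / 2.
Proof.
move=> l_gt0 gam_ge0 gam_lt1 t_gt0.
rewrite !inv2_eta_par //.
have -> : l * (1 - gam ^+ t.+1) / (2 * (1 - gam)) - l * (1 - gam ^+ t) / (2 * (1 - gam))
    = l / 2 * gam ^+ t by rewrite exprS; field; rewrite gt_eqF // subr_gt0.
by rewrite ger_pMr ?divr_gt0 // exprn_ile1 // ltW.
Qed.

Lemma inv2_eta_par1 l gam : 0 < l -> gam < 1 -> (2 * eta_par l gam 1)^-1 = l / 2.
Proof.
by move=> l_gt0 gam_lt1; rewrite /eta_par expr1; field; rewrite !gt_eqF // subr_gt0.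
Qed.

Lemma harmonic_le T : (1 <= T)%N -> \sum_(1 <= t < T.+1) (t%:R : R)^-1 <= 1 + ln (T%:R : R).
Proof.
elim: T => [//|[|T] IH] _; first by rewrite big_nat1 invr1 ln1 addr0.
rewrite big_nat_recr //= -[T.+2%:R]natr1.
have := IH isT; set x : R := T.+1%:R => IH'.
have x_gt0 : 0 < x by rewrite ltr0n.
suff : (x + 1)^-1 <= ln (x + 1) - ln x by lra.
have frac_gt0 : 0 < 1 - (x + 1)^-1 by rewrite subr_gt0 invf_lt1; lra.
have ln_x : ln x = ln (x + 1) + ln (1 - (x + 1)^-1).
  rewrite -lnM ?posrE //; last lra.
  by congr ln; field; rewrite gt_eqF //; lra.
have : - 1 < - (x + 1)^-1 by rewrite ltrN2 invf_lt1; lra.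
move=> /le_ln1Dx; lra.
Qed.

Lemma sum_eta_par_le l gam T : 0 < l -> 0 <= gam -> gam < 1 -> (1 <= T)%N ->
  \sum_(1 <= t < T.+1) eta_par l gam t <= (1 + ln (T%:R : R) + (1 - gam) * T%:R) / l.
Proof.
move=> l_gt0 gam_ge0 gam_lt1 T_ge1.
apply: le_trans (_ : \sum_(1 <= t < T.+1) (t%:R^-1 + (1 - gam)) / l <= _).
  by apply: ler_sum_nat => t /andP[t_ge1 _]; exact: eta_par_le.
rewrite -mulr_suml big_split /= sumr_const_nat subn1 /= -[(1 - gam) *+ T]mulr_natr.
rewrite ler_pM2r ?invr_gt0 //; have := harmonic_le T_ge1; lra.
Qed.

Lemma ln_ge1 T : (4 <= T)%N -> 1 <= ln (T%:R : R).
Proof.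
move=> T_ge4.
have sqrt_e_le2 : expR (2^-1) <= (2 : R).
  have e_gt0 : 0 < expR (2^-1 : R) := expR_gt0 _.
  have := ler_wpM2l (ltW e_gt0) (expR_ge1Dx (- 2^-1)).
  rewrite expRN mulfV ?gt_eqF //; lra.
rewrite -[X in X <= _](expRK 1) ler_ln ?posrE ?expR_gt0 ?ltr0n //; last by case: T T_ge4.
have -> : expR (1 : R) = expR (2^-1) * expR (2^-1) by rewrite -expRD; congr expR; field.
apply: le_trans (_ : 2 * 2 <= _); first by rewrite ler_pM ?expR_ge0.
by rewrite -natrM ler_nat; exact: T_ge4.
Qed.

Lemma weighted_telescope_le (T : nat) (w A A' e : nat -> R) (c : R) :
  (1 <= T)%N -> w 1%N = c ->
  (forall t, (1 <= t < T)%N -> w t.+1 - w t <= c) ->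
  (forall t, (1 <= t <= T)%N -> 0 <= w t) ->
  (forall t, (1 <= t <= T)%N -> 0 <= A t) ->
  (forall t, (1 <= t < T)%N -> A t.+1 - e t <= A' t) ->
  0 <= A' T ->
  \sum_(1 <= t < T.+1) (w t * (A t - A' t) - c * A t) <= \sum_(1 <= t < T) w t * e t.
Proof.
move=> T_ge1 w1 w_incr w_ge0 A_ge0 A_next A'T_ge0.
suff partial m : (1 <= m <= T)%N -> \sum_(1 <= t < m.+1) (w t * (A t - A' t) - c * A t)
    <= - (w m * A' m) + \sum_(1 <= t < m) w t * e t.
  have := partial T (introT andP (conj T_ge1 (leqnn T))).
  have : 0 <= w T * A' T by rewrite mulr_ge0 // w_ge0 // T_ge1 leqnn.
  lra.
elim: m => [//|[|m] IH] /andP[_ m_lt].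
  by rewrite big_nat1 big_geq // w1; lra.
have {}IH := IH (introT andP (conj isT (ltnW m_lt))).
rewrite big_nat_recr //= [X in _ <= _ + X]big_nat_recr //=.
have := w_incr m.+1 (introT andP (conj isT m_lt)).
have := ler_wpM2l (w_ge0 m.+1 (ltnW m_lt)) (A_next m.+1 m_lt).
have : 0 <= A m.+2 := A_ge0 m.+2 m_lt.
nra.
Qed.

Lemma sum_le_card_compl (T K : nat) (P : nat -> bool) (h : nat -> R) (B : R) :
  #|[set i : 'I_T.+1 | (1 <= val i)%N && P i]| = K ->
  (forall t, (1 <= t <= T)%N -> P t -> h t = 0) ->
  (forall t, (1 <= t <= T)%N -> h t <= B) ->
  \sum_(1 <= t < T.+1) h t <= B * (T%:R - K%:R).
Proof.
move=> cardK h0 hB.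
have K_sum : (K%:R : R) = \sum_(1 <= t < T.+1) (P t)%:R.
  rewrite -cardK -sum1_card natr_sum big_mkcond /=.
  rewrite (eq_bigr (fun i : 'I_T.+1 => if (0 < i)%N && P i then 1 else 0)); last first.
    move=> i _; congr (if _ then _ else _).
    by apply/idP/idP => [/set_mem | ?]; last exact: mem_set.
  rewrite -(big_mkord xpredT (fun i => if (0 < i)%N && P i then 1 else 0)) big_ltn // add0r.
  by apply: eq_big_nat => t /andP[-> _]; case: (P t).
have T_sum : (T%:R : R) = \sum_(1 <= t < T.+1) 1 by rewrite sumr_const_nat subn1.
rewrite K_sum T_sum -sumrB mulr_sumr.
apply: ler_sum_nat => t /andP[t_ge1 t_lt]; have tT : (1 <= t <= T)%N by rewrite t_ge1.
case: (boolP (P t)) => Pt /=; first by rewrite subrr mulr0 h0.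
by rewrite subr0 mulr1 hB.
Qed.

Lemma one_sub_gamma_par (D V : R) (T K : nat) :
  0 <= D -> (1 <= T)%N -> (K <= T)%N -> 0 <= V ->
  1 - gamma_par D V T K = Num.max (Num.sqrt (T%:R * (T%:R - K%:R + V))) (ln (T%:R : R))
                          / (2 * Num.sqrt (D + 1) * T%:R).
Proof.
move=> D_ge0 T_ge1 KT V_ge0.
set TR : R := T%:R; set P := TR - K%:R + V.
have TR_gt0 : 0 < TR by rewrite ltr0n.
have KR : K%:R <= TR by rewrite ler_nat.
have P_ge0 : 0 <= P by rewrite /P; lra.
have ln_ge0 : 0 <= ln TR by rewrite ln_ge0 // ler1n.
have sD_gt0 : 0 < Num.sqrt (D + 1) by rewrite sqrtr_gt0; lra.
set Q := Num.max _ _.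
have Q_ge0 : 0 <= Q by rewrite le_max ln_ge0 orbT.
have M_eq : Num.max (V + TR - K%:R) (ln TR ^+ 2 / TR) = Q ^+ 2 / TR.
  have -> : V + TR - K%:R = Num.sqrt (TR * P) ^+ 2 / TR.
    rewrite sqr_sqrtr ?mulr_ge0 ?(ltW TR_gt0) // /P.
    by field; rewrite gt_eqF.
  rewrite -maxr_pMl ?invr_ge0 ?ltW //; congr (_ / _).
  have sqr_le := ler_pXn2r (isT : (0 < 2)%N) (sqrtr_ge0 (TR * P)) ln_ge0.
  have sqr_ge := ler_pXn2r (isT : (0 < 2)%N) ln_ge0 (sqrtr_ge0 (TR * P)).
  rewrite /Q; have [le|lt] := leP (Num.sqrt (TR * P)) (ln TR).
    by rewrite !max_r // sqr_le.
  by rewrite !max_l // ?sqr_ge ltW.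
rewrite /gamma_par subKr -/TR M_eq.
have -> : Q ^+ 2 / TR / ((D + 1) * TR) = (Q / (Num.sqrt (D + 1) * TR)) ^+ 2.
  rewrite expr_div_n exprMn sqr_sqrtr; last lra.
  by field; rewrite !gt_eqF //; lra.
rewrite sqrtr_sqr ger0_norm; last by rewrite divr_ge0 // mulr_ge0 ?sqrtr_ge0 // ltW.
by field; rewrite !gt_eqF.
Qed.

Lemma sqrt_mul_max_le (x P : R) : 1 <= x -> 0 <= P ->
  Num.sqrt x * Num.sqrt (Num.max (Num.sqrt (x * P)) (ln x))
  <= Num.max (powR x (3 / 4) * powR P (1 / 4)) (Num.sqrt (x * ln x)).
Proof.
move=> x_ge1 P_ge0.
have x_ge0 : 0 <= x by lra.
have ln_ge0 : 0 <= ln x by rewrite ln_ge0.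
have [le|lt] := leP (Num.sqrt (x * P)) (ln x).
  by rewrite -sqrtrM // le_max lexx orbT.
rewrite le_max; apply/orP; left.
rewrite -!powR12_sqrt ?mulr_ge0 ?powR_ge0 // powRM // powRM ?powR_ge0 //.
rewrite -!powRrM mulrA -powRD; last by apply/implyP => _; rewrite gt_eqF //; lra.
have -> : (2^-1 + 2^-1 * 2^-1 : R) = 3 / 4 by field.
by have -> : (2^-1 * 2^-1 : R) = 1 / 4 by field.
Qed.

Lemma sqrtD1_ge1 (D : R) : 0 <= D -> 1 <= Num.sqrt (D + 1).
Proof. by move=> D_ge0; rewrite -[X in X <= _]sqrtr1 ler_sqrt; lra. Qed.

Lemma tuned_rate_mul_le (D T Q a : R) : 0 <= D -> 0 < T -> 0 <= Q ->
  a = Q / (2 * Num.sqrt (D + 1) * T) -> a * T <= Q.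
Proof.
move=> D_ge0 T_gt0 Q_ge0 ->; have sD_ge1 := sqrtD1_ge1 D_ge0.
have -> : Q / (2 * Num.sqrt (D + 1) * T) * T = Q / (2 * Num.sqrt (D + 1)).
  by field; rewrite !gt_eqF //; lra.
by rewrite ler_pdivrMr ?ler_peMr ?mulr_gt0 //; lra.
Qed.

Lemma amgm_sqrt_le (G l k T Q SX SE : R) :
  0 < l -> 0 < T -> 0 < Q -> 0 <= k -> SX <= k * T -> SE <= 3 * Q / l ->
  4 * G ^+ 2 / (Num.sqrt T / Num.sqrt Q) * SX + Num.sqrt T / Num.sqrt Q / 2 * SE
  <= (4 * G ^+ 2 * k + 3 / (2 * l)) * (Num.sqrt T * Num.sqrt Q).
Proof.
move=> l_gt0 T_gt0 Q_gt0 k_ge0 SX_le SE_le.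
have sT_gt0 : 0 < Num.sqrt T by rewrite sqrtr_gt0.
have sQ_gt0 : 0 < Num.sqrt Q by rewrite sqrtr_gt0.
set sT := Num.sqrt T in sT_gt0 *; set sQ := Num.sqrt Q in sQ_gt0 *.
have T_eq : T = sT ^+ 2 by rewrite sqr_sqrtr ?ltW.
have Q_eq : Q = sQ ^+ 2 by rewrite sqr_sqrtr ?ltW.
have s_ge0 : 0 <= sT / sQ by rewrite divr_ge0 ?ltW.
have c1_ge0 : 0 <= 4 * G ^+ 2 / (sT / sQ) by rewrite divr_ge0 // mulr_ge0 ?sqr_ge0.
have c2_ge0 : 0 <= sT / sQ / 2 by rewrite divr_ge0.
have := ler_wpM2l c1_ge0 SX_le; have := ler_wpM2l c2_ge0 SE_le.
have -> : sT / sQ / 2 * (3 * Q / l) = 3 / (2 * l) * (sT * sQ).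
  by rewrite Q_eq; field; rewrite !gt_eqF.
have -> : 4 * G ^+ 2 / (sT / sQ) * (k * T) = 4 * G ^+ 2 * k * (sT * sQ).
  by rewrite T_eq; field; rewrite !gt_eqF.
rewrite mulrDl; lra.
Qed.

End Estimates.

Definition tradeoff_const (R : realType) (l G F D : R) : R :=
  l * pos_part F ^+ 2 * Num.sqrt (D + 1) / G ^+ 2 + 2 * D * l * Num.sqrt (D + 1)
  + 3 * G ^+ 2 / l.

Definition regret_const (R : realType) (l G F D : R) : R :=
  tradeoff_const l G F D + G * D.

Definition violation_const (R : realType) (l G F D : R) : R :=
  4 * G ^+ 2 * regret_const l G F D + 3 / (2 * l) + pos_part F.

Section Constants.
Variables (R : realType) (l G F D : R).
Hypotheses (l_gt0 : 0 < l) (G_gt0 : 0 < G) (D_ge0 : 0 <= D).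

Lemma tradeoff_const_gt0 : 0 < tradeoff_const l G F D.
Proof.
have sD_ge0 := sqrtr_ge0 (D + 1).
have : 0 < 3 * G ^+ 2 / l by rewrite divr_gt0 ?mulr_gt0 ?exprn_gt0.
have : 0 <= 2 * D * l * Num.sqrt (D + 1) by rewrite !mulr_ge0 ?(ltW l_gt0).
have := divr_ge0 (mulr_ge0 (mulr_ge0 (ltW l_gt0) (sqr_ge0 (pos_part F))) sD_ge0)
  (sqr_ge0 G).
rewrite /tradeoff_const; lra.
Qed.

Lemma GD_ge0 : 0 <= G * D.
Proof. by rewrite mulr_ge0 // ltW. Qed.

Lemma regret_const_ge :
  tradeoff_const l G F D <= regret_const l G F D /\ G * D <= regret_const l G F D.
Proof.
have := tradeoff_const_gt0; have := GD_ge0.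
by rewrite /regret_const; split; lra.
Qed.

Lemma violation_const_ge :
  [/\ 0 <= violation_const l G F D,
      4 * G ^+ 2 * regret_const l G F D + 3 / (2 * l) <= violation_const l G F D &
      pos_part F <= violation_const l G F D].
Proof.
have [_ GD_le] := regret_const_ge; have GD := GD_ge0.
have : 0 <= 4 * G ^+ 2 * regret_const l G F D.
  by apply: mulr_ge0; [rewrite mulr_ge0 ?sqr_ge0 | lra].
have : 0 <= 3 / (2 * l) by rewrite divr_ge0 // mulr_ge0 // ltW.
have := pos_part_ge0 F.
by rewrite /violation_const; split; lra.
Qed.

Lemma tuned_tradeoff_le (T Q X Y a : R) :
  0 < T -> 1 <= Q -> ln T <= Q ->
  T * X <= Q ^+ 2 -> T * Y <= Q ^+ 2 -> a = Q / (2 * Num.sqrt (D + 1) * T) ->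
  l * pos_part F ^+ 2 / (2 * a * G ^+ 2) * X + D * l / a * Y
    + G ^+ 2 * (1 + ln T + a * T) / l
  <= tradeoff_const l G F D * Q.
Proof.
move=> T_gt0 Q_ge1 lnT_le TX_le TY_le aE.
set Fp := pos_part F.
set sD := Num.sqrt (D + 1) in aE *.
have sD_ge1 : 1 <= sD := sqrtD1_ge1 D_ge0.
have Q_gt0 : 0 < Q by lra.
have ratio_le Z : T * Z <= Q ^+ 2 -> T * Z / Q <= Q.
  by move=> TZ; rewrite ler_pdivrMr // -expr2.
have -> : l * Fp ^+ 2 / (2 * a * G ^+ 2) * X = l * Fp ^+ 2 * sD / G ^+ 2 * (T * X / Q).
  by rewrite aE; field; rewrite !gt_eqF //; lra.
have -> : D * l / a * Y = 2 * D * l * sD * (T * Y / Q).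
  by rewrite aE; field; rewrite !gt_eqF //; lra.
have aT_le := tuned_rate_mul_le D_ge0 T_gt0 (ltW Q_gt0) aE.
have sD_ge0 : 0 <= sD by lra.
have c1_ge0 : 0 <= l * Fp ^+ 2 * sD / G ^+ 2.
  by rewrite divr_ge0 ?sqr_ge0 // mulr_ge0 // mulr_ge0 ?sqr_ge0 // ltW.
have c2_ge0 : 0 <= 2 * D * l * sD by rewrite !mulr_ge0 // ltW.
have := ler_wpM2l c1_ge0 (ratio_le X TX_le).
have := ler_wpM2l c2_ge0 (ratio_le Y TY_le).
have : G ^+ 2 * (1 + ln T + a * T) / l <= 3 * G ^+ 2 / l * Q.
  have -> : 3 * G ^+ 2 / l * Q = G ^+ 2 * (3 * Q) / l by field; rewrite gt_eqF.
  rewrite ler_pM2r ?invr_gt0 //; apply: ler_wpM2l; [exact: sqr_ge0 | lra].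
move=> h1 h2 h3; rewrite /tradeoff_const -/Fp -/sD !mulrDl; lra.
Qed.

End Constants.

Section PrimalDual.
Variables (R : realType) (n : nat) (S : set 'rV[R]_n) (l G F D gam V : R) (T K : nat).
Variables (f g : nat -> 'rV[R]_n -> R) (df dg : nat -> 'rV[R]_n -> 'rV[R]_n).
Variables (theta z : nat -> 'rV[R]_n).
Hypotheses (l_gt0 : 0 < l) (G_gt0 : 0 < G) (convS : convex_set_R S).
Hypothesis diamS : forall x y, S x -> S y -> enorm (x - y) <= D.
Hypothesis fg_bounds : forall t x, (1 <= t <= T)%N -> S x ->
  [/\ f t x <= F, g t x <= F,
      is_sc_subgrad S l (f t) x (df t x) & is_subgrad S (g t) x (dg t x)] /\
  enorm (df t x) <= G /\ enorm (dg t x) <= G.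
Hypothesis theta1_in : S (theta 1%N).
Hypothesis theta_step : forall t, (1 <= t <= T)%N ->
  let eta := eta_par l gam t in
  let lam := pos_part (g t (theta t)) / phi_par G eta in
  let sg := if 0 < g t (theta t) then dg t (theta t) else 0 in
  is_proj S (theta t - eta *: (df t (theta t) + lam *: sg)) (theta t.+1).
Hypothesis z_VK : in_VK S g T V K z.

Local Notation eta t := (eta_par l gam t).
Local Notation regret t := (f t (theta t) - f t (z t)).
Local Notation viol t := (pos_part (g t (theta t))).
Local Notation sqd t := (dot (theta t - z t) (theta t - z t)).
Local Notation sqd' t := (dot (theta t.+1 - z t) (theta t.+1 - z t)).

Lemma theta_in t : (1 <= t <= T.+1)%N -> S (theta t).
Proof.
elim: t => [//|[|t] IH] /andP[_ tT] //.
by have [] := @theta_step t.+1 tT.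
Qed.

Lemma diam_ge0 : 0 <= D.
Proof. exact: le_trans (enorm_ge0 _) (diamS theta1_in theta1_in). Qed.

Lemma theta_in_range t : (1 <= t <= T)%N -> S (theta t).
Proof. by case/andP=> t_ge1 tT; apply: theta_in; rewrite t_ge1 ltnW. Qed.

Lemma regret_abs_le t : (1 <= t <= T)%N -> `|regret t| <= G * D.
Proof.
move=> tT; have Sth := theta_in_range tT; have Sz := z_VK.1 t tT.
have [[_ _ fsc_th _] [dfG_th _]] := fg_bounds tT Sth.
have [[_ _ fsc_z _] [dfG_z _]] := fg_bounds tT Sz.
rewrite ler_norml; apply/andP; split.
  rewrite lerNl opprB.
  exact: sc_subgrad_gap_le fsc_z Sth (ltW l_gt0) dfG_z (diamS Sz Sth).
exact: sc_subgrad_gap_le fsc_th Sz (ltW l_gt0) dfG_th (diamS Sth Sz).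
Qed.

Lemma viol_le t : (1 <= t <= T)%N -> viol t <= pos_part F.
Proof.
by move=> tT; have [[_ gF _ _] _] := fg_bounds tT (theta_in_range tT); exact: pos_part_le.
Qed.

Lemma sum_regret_abs_le : `|\sum_(1 <= t < T.+1) regret t| <= G * D * T%:R.
Proof.
apply: le_trans (ler_norm_sum _ _ _) _.
apply: le_trans (_ : _ <= \sum_(1 <= t < T.+1) G * D) _.
  by apply: ler_sum_nat => t; rewrite ltnS; exact: regret_abs_le.
by rewrite sumr_const_nat subn1 /= mulr_natr.
Qed.

Lemma sum_viol_le : \sum_(1 <= t < T.+1) viol t <= pos_part F * T%:R.
Proof.
apply: le_trans (_ : _ <= \sum_(1 <= t < T.+1) pos_part F) _.
  by apply: ler_sum_nat => t; rewrite ltnS; exact: viol_le.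
by rewrite sumr_const_nat subn1 /= mulr_natr.
Qed.

Section StepSize.
Hypotheses (gam_ge0 : 0 <= gam) (gam_lt1 : gam < 1).

Let one_sub_gam_gt0 : 0 < 1 - gam. Proof. by rewrite subr_gt0. Qed.

Lemma regret_step_le t : (1 <= t <= T)%N ->
  regret t + viol t ^+ 2 / (8 * G ^+ 2 * eta t)
  <= pos_part (g t (z t)) ^+ 2 / (2 * G ^+ 2 * eta t)
     + ((sqd t - sqd' t) / (2 * eta t) - l / 2 * sqd t) + G ^+ 2 * eta t.
Proof.
move=> tT; have [[_ _ fsc gsub] [dfG dgG]] := fg_bounds tT (theta_in_range tT).
rewrite addrA; apply: penalized_step_le (theta_step tT) => //.
  by apply: eta_par_gt0; case/andP: tT.
exact: z_VK.1.
Qed.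

Lemma sum_penalty_le :
  \sum_(1 <= t < T.+1) pos_part (g t (z t)) ^+ 2 / (2 * G ^+ 2 * eta t)
  <= l * pos_part F ^+ 2 / (2 * (1 - gam) * G ^+ 2) * (T%:R - K%:R).
Proof.
have [z_in [_ cardK]] := z_VK.
apply: (sum_le_card_compl (P := fun t => g t (z t) <= 0) cardK) => t tT.
  by move=> gz_le0; rewrite pos_part_le0 // expr0n /= mul0r.
have [[_ gF _ _] _] := fg_bounds tT (z_in t tT).
have t_gt0 : (0 < t)%N by case/andP: tT.
have eta_gt0 := eta_par_gt0 l_gt0 gam_ge0 gam_lt1 t_gt0.
have b_le : pos_part (g t (z t)) ^+ 2 <= pos_part F ^+ 2.
  by rewrite ler_pXn2r ?nnegrE ?pos_part_ge0 ?pos_part_le.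
have w_ge0 : 0 <= (2 * eta t)^-1 by rewrite invr_ge0 mulr_ge0 // ltW.
have := ler_pM (sqr_ge0 _) w_ge0 b_le (inv2_eta_par_le l_gt0 gam_ge0 gam_lt1 t_gt0).
have -> : pos_part (g t (z t)) ^+ 2 / (2 * G ^+ 2 * eta t)
    = pos_part (g t (z t)) ^+ 2 * (2 * eta t)^-1 / G ^+ 2.
  by field; rewrite !gt_eqF.
have -> : l * pos_part F ^+ 2 / (2 * (1 - gam) * G ^+ 2)
    = pos_part F ^+ 2 * (l / (2 * (1 - gam))) / G ^+ 2 by field; rewrite !gt_eqF.
by move=> h; rewrite ler_pM2r ?invr_gt0 ?exprn_gt0.
Qed.

Lemma sum_telescope_le : (1 <= T)%N ->
  \sum_(1 <= t < T.+1) ((sqd t - sqd' t) / (2 * eta t) - l / 2 * sqd t) <= D * l / (1 - gam) * V.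
Proof.
move=> T_ge1; have [z_in [path_le _]] := z_VK.
have w_le t : (0 < t)%N -> (2 * eta t)^-1 <= l / (2 * (1 - gam)).
  exact: inv2_eta_par_le.
have w_ge0 t : (0 < t)%N -> 0 <= (2 * eta t)^-1.
  by move=> t_gt0; rewrite invr_ge0 mulr_ge0 // ltW // eta_par_gt0.
under eq_bigr do rewrite mulrC.
apply: le_trans (weighted_telescope_le
  (e := fun t => 2 * D * enorm (z t.+1 - z t)) T_ge1 _ _ _ _ _ (dot_ge0 _)) _.
- exact: inv2_eta_par1.
- by move=> t /andP[t_gt0 _]; exact: inv2_eta_parS.
- by move=> t /andP[t_gt0 _]; exact: w_ge0.
- by move=> t _; exact: dot_ge0.
- move=> t /andP[t_gt0 tT]; rewrite lerBlDr.
  have Sth := @theta_in t.+1 (ltnW tT).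
  apply: sqrdist_switch_le; apply: diamS => //; apply: z_in => //.
  by rewrite t_gt0 ltnW.
have D_ge0 := diam_ge0.
apply: le_trans (_ : \sum_(1 <= t < T) D * l / (1 - gam) * enorm (z t.+1 - z t) <= _).
  apply: ler_sum_nat => t /andP[t_gt0 _].
  have -> : D * l / (1 - gam) * enorm (z t.+1 - z t)
      = l / (2 * (1 - gam)) * (2 * D * enorm (z t.+1 - z t)) by field; rewrite gt_eqF.
  by apply: ler_wpM2r; [rewrite !mulr_ge0 ?enorm_ge0 | exact: w_le].
rewrite -mulr_sumr ler_wpM2l ?divr_ge0 ?mulr_ge0 ?(ltW l_gt0) ?(ltW one_sub_gam_gt0) //.
by move: path_le; rewrite big_add1.
Qed.

Lemma regret_tradeoff : (1 <= T)%N ->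
  \sum_(1 <= t < T.+1) regret t + \sum_(1 <= t < T.+1) viol t ^+ 2 / (8 * G ^+ 2 * eta t)
  <= l * pos_part F ^+ 2 / (2 * (1 - gam) * G ^+ 2) * (T%:R - K%:R) + D * l / (1 - gam) * V
     + G ^+ 2 * (1 + ln (T%:R : R) + (1 - gam) * T%:R) / l.
Proof.
move=> T_ge1; rewrite -big_split /=.
apply: le_trans (ler_sum_nat _) _ => [t|]; first by rewrite ltnS; exact: regret_step_le.
rewrite big_split [X in X + _ <= _]big_split /= -mulr_sumr.
apply: lerD; first exact: lerD sum_penalty_le (sum_telescope_le T_ge1).
by rewrite -mulrA; apply: ler_wpM2l; [exact: sqr_ge0 | exact: sum_eta_par_le].
Qed.

Lemma violation_amgm (s : R) : 0 < s ->
  \sum_(1 <= t < T.+1) viol t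
  <= 4 * G ^+ 2 / s * \sum_(1 <= t < T.+1) viol t ^+ 2 / (8 * G ^+ 2 * eta t)
     + s / 2 * \sum_(1 <= t < T.+1) eta t.
Proof.
move=> s_gt0; rewrite !mulr_sumr -big_split /=.
apply: ler_sum_nat => t /andP[t_gt0 _].
have eta_gt0 := eta_par_gt0 l_gt0 gam_ge0 gam_lt1 t_gt0.
have k_gt0 : 0 < (s * eta t)^-1 by rewrite invr_gt0 mulr_gt0.
have := young_le (viol t) 1 k_gt0.
have -> : 4 * G ^+ 2 / s * (viol t ^+ 2 / (8 * G ^+ 2 * eta t)) + s / 2 * eta t
    = (s * eta t)^-1 * viol t ^+ 2 / 2 + 1 ^+ 2 / (2 * (s * eta t)^-1).
  by field; rewrite !gt_eqF.
by rewrite mulr1.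
Qed.

End StepSize.

Lemma regret_violation_le_tuned (Q : R) : (1 <= T)%N -> (K <= T)%N -> 0 <= V ->
  1 <= Q -> ln (T%:R : R) <= Q -> T%:R * (T%:R - K%:R + V) <= Q ^+ 2 -> Q < T%:R ->
  1 - gam = Q / (2 * Num.sqrt (D + 1) * T%:R) ->
  \sum_(1 <= t < T.+1) regret t <= tradeoff_const l G F D * Q /\
  \sum_(1 <= t < T.+1) viol t
    <= (4 * G ^+ 2 * regret_const l G F D + 3 / (2 * l)) * (Num.sqrt T%:R * Num.sqrt Q).
Proof.
move=> T_ge1 KT V_ge0 Q_ge1 lnT_le TP_le QT gamE.
have D_ge0 := diam_ge0; have sD_ge1 := sqrtD1_ge1 D_ge0.
have T_gt0 : 0 < T%:R :> R by rewrite ltr0n.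
have TK_ge0 : 0 <= T%:R - K%:R :> R by rewrite subr_ge0 ler_nat.
have TP_le' X : X <= T%:R - K%:R + V -> T%:R * X <= Q ^+ 2.
  by move=> XP; exact: le_trans (ler_wpM2l (ltW T_gt0) XP) TP_le.
have TK_le : T%:R - K%:R <= T%:R - K%:R + V by rewrite lerDl.
have V_le : V <= T%:R - K%:R + V by rewrite lerDr.
have gam_lt1 : gam < 1 by rewrite -subr_gt0 gamE divr_gt0 ?mulr_gt0 //; lra.
have gam_ge0 : 0 <= gam.
  suff : 1 - gam <= 1 by lra.
  by rewrite gamE ler_pdivrMr ?mulr_gt0 //; [nra | lra].
have tradeoff := le_trans (regret_tradeoff gam_ge0 gam_lt1 T_ge1)
  (tuned_tradeoff_le F l_gt0 G_gt0 D_ge0 T_gt0 Q_ge1 lnT_le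
     (TP_le' _ TK_le) (TP_le' _ V_le) gamE).
have SX_ge0 : 0 <= \sum_(1 <= t < T.+1) viol t ^+ 2 / (8 * G ^+ 2 * eta t).
  rewrite big_nat_cond; apply: sumr_ge0 => t /andP[/andP[t_gt0 _] _].
  have eta_gt0 := eta_par_gt0 l_gt0 gam_ge0 gam_lt1 t_gt0.
  have c_gt0 : 0 < 8 * G ^+ 2 := mulr_gt0 (ltr0Sn _ 7) (exprn_gt0 2 G_gt0).
  by rewrite divr_ge0 ?sqr_ge0 // ltW // mulr_gt0.
have := sum_regret_abs_le; rewrite ler_norml => /andP[regret_ge _].
split; first lra.
have [tc_le_rc GD_le_rc] := regret_const_ge F l_gt0 G_gt0 D_ge0.
have tc_gt0 := tradeoff_const_gt0 F l_gt0 G_gt0 D_ge0.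
have SE_le : \sum_(1 <= t < T.+1) eta t <= 3 * Q / l.
  apply: le_trans (sum_eta_par_le l_gt0 gam_ge0 gam_lt1 T_ge1) _.
  have := tuned_rate_mul_le D_ge0 T_gt0 (le_trans ler01 Q_ge1) gamE.
  by rewrite ler_pM2r ?invr_gt0 //; lra.
(* AM-GM with weight [sqrt (T / Q)] balances the two sums. *)
apply: le_trans (violation_amgm gam_ge0 gam_lt1 (_ : 0 < Num.sqrt T%:R / Num.sqrt Q)) _.
  by rewrite divr_gt0 // sqrtr_gt0; lra.
apply: amgm_sqrt_le => //; [lra | lra |].
have -> : regret_const l G F D * T%:R = tradeoff_const l G F D * T%:R + G * D * T%:R.
  by rewrite /regret_const mulrDl.
have := ler_wpM2l (ltW tc_gt0) (ltW QT); lra.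
Qed.

Lemma regret_violation_le : (4 <= T)%N -> (K <= T)%N -> 0 <= V -> gam = gamma_par D V T K ->
  \sum_(1 <= t < T.+1) regret t
    <= regret_const l G F D
       * Num.max (Num.sqrt (T%:R * (T%:R - K%:R + V))) (ln (T%:R : R)) /\
  \sum_(1 <= t < T.+1) viol t
    <= violation_const l G F D
       * (Num.sqrt T%:R * Num.sqrt (Num.max (Num.sqrt (T%:R * (T%:R - K%:R + V)))
                                            (ln (T%:R : R)))).
Proof.
move=> T_ge4 KT V_ge0 gamE; set Q := Num.max _ _.
have D_ge0 := diam_ge0; have T_ge1 := leq_trans (isT : (1 <= 4)%N) T_ge4.
have lnT_le : ln (T%:R : R) <= Q by rewrite le_max lexx orbT.
have Q_ge1 : 1 <= Q := le_trans (ln_ge1 R T_ge4) lnT_le.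
have TK_ge0 : 0 <= T%:R - K%:R :> R by rewrite subr_ge0 ler_nat.
have TP_ge0 := mulr_ge0 (ler0n R T) (addr_ge0 TK_ge0 V_ge0).
have TP_le : T%:R * (T%:R - K%:R + V) <= Q ^+ 2.
  rewrite -(sqr_sqrtr TP_ge0) ler_pXn2r ?nnegrE ?sqrtr_ge0 ?(le_trans ler01) //.
  by rewrite le_max lexx.
have [rc_ge_tc rc_ge_GD] := regret_const_ge F l_gt0 G_gt0 D_ge0.
have [_ vc_ge vc_ge_F] := violation_const_ge F l_gt0 G_gt0 D_ge0.
have sTQ_ge0 : 0 <= Num.sqrt T%:R * Num.sqrt Q by rewrite mulr_ge0 ?sqrtr_ge0.
have [QT | TQ] := ltP Q T%:R.
  have gam_tuned : 1 - gam = Q / (2 * Num.sqrt (D + 1) * T%:R).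
    by rewrite gamE one_sub_gamma_par.
  have [regret_bound viol_bound] :=
    regret_violation_le_tuned T_ge1 KT V_ge0 Q_ge1 lnT_le TP_le QT gam_tuned.
  split; first by apply: le_trans regret_bound _; rewrite ler_wpM2r // (le_trans ler01).
  by apply: le_trans viol_bound _; rewrite ler_wpM2r.
have T_le : T%:R <= Num.sqrt T%:R * Num.sqrt Q.
  rewrite -{1}(sqr_sqrtr (ler0n R T)) expr2 ler_wpM2l ?sqrtr_ge0 // ler_sqrt //.
  exact: le_trans ler01 Q_ge1.
have := sum_regret_abs_le; rewrite ler_norml => /andP[_ regret_bound].
split.
  apply: le_trans regret_bound _; apply: le_trans (_ : G * D * Q <= _).
    by rewrite ler_wpM2l ?mulr_ge0 ?(ltW G_gt0).
  by rewrite ler_wpM2r // (le_trans ler01).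
apply: le_trans sum_viol_le _.
apply: le_trans (_ : pos_part F * (Num.sqrt T%:R * Num.sqrt Q) <= _).
  by rewrite ler_wpM2l ?pos_part_ge0.
by rewrite ler_wpM2r.
Qed.

End PrimalDual.

Unset Implicit Arguments. Set Strict Implicit.

Theorem theorem5p4 (R : realType) (l G F D : R) :
  0 < l -> 0 < G -> 0 <= D ->
  exists (C : R) (T0 : nat), 0 < C /\
  forall (n : nat) (S0 : set 'rV[R]_n) (T : nat)
         (f g : nat -> 'rV[R]_n -> R) (df dg : nat -> 'rV[R]_n -> 'rV[R]_n)
         (V : R) (K : nat) (theta z : nat -> 'rV[R]_n),
    compact S0 -> convex_set_R S0 -> has_diameter S0 D ->
    (T0 <= T)%N ->
    (forall t x, (1 <= t <= T)%N -> S0 x ->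
       [/\ f t x <= F, g t x <= F,
           is_sc_subgrad S0 l (f t) x (df t x) & is_subgrad S0 (g t) x (dg t x)] /\
       enorm (df t x) <= G /\ enorm (dg t x) <= G) ->
    0 <= V -> (1 <= K <= T)%N ->
    S0 (theta 1%N) ->
    (forall t, (1 <= t <= T)%N ->
       let gam := gamma_par D V T K in
       let eta := eta_par l gam t in
       let phi := phi_par G eta in
       let lam := pos_part (g t (theta t)) / phi in
       let sg := if 0 < g t (theta t) then dg t (theta t) else 0 in
       is_proj S0 (theta t - eta *: (df t (theta t) + lam *: sg)) (theta t.+1)) ->
    in_VK S0 g T V K z ->
    \sum_(1 <= t < T.+1) (f t (theta t) - f t (z t))
      <= C * Num.max (Num.sqrt (T%:R * (T%:R - K%:R + V))) (ln (T%:R)) /\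
    \sum_(1 <= t < T.+1) pos_part (g t (theta t))
      <= C * Num.max (powR T%:R (3 / 4) * powR (T%:R - K%:R + V) (1 / 4))
                     (Num.sqrt (T%:R * ln (T%:R))).
Proof.
move=> l_gt0 G_gt0 D_ge0.
have tc_gt0 := tradeoff_const_gt0 F l_gt0 G_gt0 D_ge0.
have [rc_ge_tc _] := regret_const_ge F l_gt0 G_gt0 D_ge0.
have [vc_ge0 _ _] := violation_const_ge F l_gt0 G_gt0 D_ge0.
exists (regret_const l G F D + violation_const l G F D), 4%N; split; first lra.
move=> n S0 T f g df dg V K theta z _ convS [diamS _] T_ge4 fg_bounds V_ge0 /andP[_ KT]
  theta1 theta_step z_VK.
have [regret_bound viol_bound] := regret_violation_le (gam := gamma_par D V T K)
  l_gt0 G_gt0 convS diamS fg_bounds theta1 theta_step z_VK T_ge4 KT V_ge0 erefl.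
have T_ge1 : 1 <= T%:R :> R by rewrite ler1n; exact: leq_trans T_ge4.
have P_ge0 : 0 <= T%:R - K%:R + V :> R by rewrite addr_ge0 // subr_ge0 ler_nat.
have Q_ge0 : 0 <= Num.max (Num.sqrt (T%:R * (T%:R - K%:R + V))) (ln (T%:R : R)).
  by rewrite le_max sqrtr_ge0.
split; first by apply: le_trans regret_bound _; rewrite ler_wpM2r // lerDl.
apply: le_trans viol_bound _.
apply: le_trans (ler_wpM2l vc_ge0 (sqrt_mul_max_le T_ge1 P_ge0)) _.
by rewrite ler_wpM2r ?lerDr ?le_max ?sqrtr_ge0 ?orbT //; lra.
Qed.
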